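(* For every real number $\theta\in(0,1/4]\cup(3/11,2/7]$ there exists a finite simple graph $G$ such that $P^{J(\theta)}(G)\neq G$ and $P^{J(\theta)}\big(P^{J(\theta)}(G)\big)=G$.
   Context: All graphs are finite and simple. For a vertex $v$ of a graph $G$, $N[v]$ denotes its closed neighbourhood in $G$ (the set of neighbours of $v$ together with $v$). The Jaccard similarity of vertices $u,v$ in $G$ is $J_G(u,v)=|N[u]\cap N[v]|/|N[u]\cup N[v]|$. For a real threshold $\theta$, $P^{J(\theta)}(G)$ (the $\theta$-Jaccard polishing of $G$) is the graph on the same vertex set as $G$ in which two distinct vertices $u,v$ are adjacent if and only if $J_G(u,v)\ge\theta$. Equality of graphs means equality of edge sets on the same vertex set. *)

From mathcomp Require Import all_boot.
From Stdlib Require Import Reals.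

Set Implicit Arguments.
Unset Strict Implicit.
Unset Printing Implicit Defensive.

Definition simple_graph (T : finType) (e : rel T) : Prop :=
  symmetric e /\ irreflexive e.

Definition closed_nbhd (T : finType) (e : rel T) (v : T) : {set T} :=
  [set w | (w == v) || e v w].

Definition jaccard (T : finType) (e : rel T) (u v : T) : R :=
  (INR #|closed_nbhd e u :&: closed_nbhd e v| /
   INR #|closed_nbhd e u :|: closed_nbhd e v|)%R.

Definition jpolish (theta : R) (T : finType) (e : rel T) : rel T :=
  fun u v => (u != v) && (if Rle_dec theta (jaccard e u v) then true else false).

From mathcomp Require Import all_boot zify.
From Stdlib Require Import Reals Lra Lia.

(* Blow up a 14-vertex pattern: an apex 0 with a leaf 1, a hexagon 2..7 whose even
   vertices are joined to the apex, and a pendant c + 6 at each hexagon vertex c.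
   When every pattern vertex becomes a clique, the Jaccard similarity of two vertices
   only depends on their classes, and for suitable clique sizes the pairs of classes
   with similarity at least theta are exactly the edges of the same pattern with the
   apex joined to the odd hexagon vertices instead; by the reflection of the hexagon
   the converse also holds, so theta-polishing swaps the two blow-ups.  For theta in
   (3/11, 2/7] all cliques are single vertices; for theta in (1/(n+1), 1/n] with
   n >= 4 the hexagon cliques have 4 vertices and the leaf and pendant cliques 3n - 5. *)

Lemma le_INR_div {a b c d : nat} : (0 < b)%N -> (0 < d)%N ->
  (a * d <= c * b)%N -> (INR a / INR b <= INR c / INR d)%R.
Proof.
move=> /ltP/lt_0_INR b0 /ltP/lt_0_INR d0 /leP/le_INR; rewrite !mult_INR => le_ad_cb.
have -> : (INR a / INR b = INR a * INR d / (INR b * INR d))%R by field; lra.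
have -> : (INR c / INR d = INR c * INR b / (INR b * INR d))%R by field; lra.
by apply: Rmult_le_compat_r; [apply/Rlt_le/Rinv_0_lt_compat; nra | lra].
Qed.

Definition ratio_separated (mt jn : nat) (edge : bool) (n1 n2 e1 e2 : nat) : bool :=
  (0 < jn) && (if edge then e1 * jn <= mt * e2 else mt * n2 <= n1 * jn).

Lemma ratio_separated_threshold {theta : R} {mt jn : nat} {edge : bool} {n1 n2 e1 e2 : nat} :
  (0 < n2)%N -> (0 < e2)%N -> (INR n1 / INR n2 < theta <= INR e1 / INR e2)%R ->
  ratio_separated mt jn edge n1 n2 e1 e2 ->
  (if Rle_dec theta (INR mt / INR jn) then true else false) = edge.
Proof.
move=> n2_gt0 e2_gt0 [lo hi] /andP[jn_gt0].
case: edge => sep; case: Rle_dec => //= le_theta.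
- by case: le_theta; exact: (Rle_trans _ _ _ hi (le_INR_div e2_gt0 jn_gt0 sep)).
- by have := le_INR_div jn_gt0 n2_gt0 sep; lra.
Qed.

Lemma jpolish_ext (theta : R) {T : finType} {e e' : rel T} :
  e =2 e' -> jpolish theta e =2 jpolish theta e'.
Proof.
move=> ee' u v; have nbhdE x : closed_nbhd e x = closed_nbhd e' x.
  by apply/setP => y; rewrite !inE ee'.
by rewrite /jpolish /jaccard !nbhdE.
Qed.

Section Blowup.

Context {K : finType}.
Implicit Types (wt : K -> nat) (Q : rel K).

Definition blowup wt Q : rel {k : K & 'I_(wt k)} :=
  fun u v => (u != v) && Q (tag u) (tag v).

Definition class_meet wt Q (a b : K) : nat := \sum_(k | Q a k && Q b k) wt k.
Definition class_join wt Q (a b : K) : nat := \sum_(k | Q a k || Q b k) wt k.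

Lemma card_tag_fiber wt (k : K) :
  #|[set v : {k : K & 'I_(wt k)} | tag v == k]| = wt k.
Proof.
have := card_imset [set: 'I_(wt k)] (@eq_from_Tagged K (fun k => 'I_(wt k)) k).
rewrite cardsT card_ord => <-.
apply: eq_card => v; rewrite inE; apply/eqP/imsetP => [|[x _ ->] //].
by move: v => [i x] /= <-; exists x; rewrite ?in_setT.
Qed.

Lemma card_tag_preim wt (P : pred K) :
  #|[set v : {k : K & 'I_(wt k)} | P (tag v)]| = \sum_(k | P k) wt k.
Proof.
rewrite -sum1_card (partition_big tag P) => [|v]; last by rewrite inE.
apply: eq_bigr => k Pk; rewrite -card_tag_fiber -sum1_card.
by apply: eq_bigl => v; rewrite !inE andb_idl // => /eqP ->.
Qed.

Lemma blowup_simple wt Q : symmetric Q -> simple_graph (blowup wt Q).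
Proof. by move=> symQ; split=> [u v|u]; rewrite /blowup ?eqxx // eq_sym symQ. Qed.

Lemma closed_nbhd_blowup wt Q (u : {k : K & 'I_(wt k)}) : reflexive Q ->
  closed_nbhd (blowup wt Q) u = [set v | Q (tag u) (tag v)].
Proof.
move=> reflQ; apply/setP => v; rewrite !inE /blowup eq_sym.
by case: eqP => [->|]; rewrite ?reflQ.
Qed.

Lemma jaccard_blowup wt Q (u v : {k : K & 'I_(wt k)}) : reflexive Q ->
  jaccard (blowup wt Q) u v
  = (INR (class_meet wt Q (tag u) (tag v)) / INR (class_join wt Q (tag u) (tag v)))%R.
Proof.
move=> reflQ; rewrite /jaccard !closed_nbhd_blowup //.
rewrite /class_meet /class_join -!card_tag_preim.
by f_equal; f_equal; apply: eq_card => x; rewrite !inE.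
Qed.

Section Polishing.

Variables (theta : R) (n1 n2 e1 e2 : nat).
Hypotheses (n2_gt0 : (0 < n2)%N) (e2_gt0 : (0 < e2)%N).
Hypothesis theta_gap : (INR n1 / INR n2 < theta <= INR e1 / INR e2)%R.

Definition jaccard_separates wt Q Q' : Prop := forall a b : K,
  ratio_separated (class_meet wt Q a b) (class_join wt Q a b) (Q' a b) n1 n2 e1 e2.

Lemma jpolish_blowup wt Q Q' : reflexive Q -> jaccard_separates wt Q Q' ->
  jpolish theta (blowup wt Q) =2 blowup wt Q'.
Proof.
move=> reflQ sep u v; rewrite /jpolish /blowup jaccard_blowup //.
by rewrite (ratio_separated_threshold n2_gt0 e2_gt0 theta_gap (sep _ _)).
Qed.

Lemma blowup_jpolish_swap wt Q Q' (a b : K) :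
  reflexive Q -> symmetric Q -> reflexive Q' ->
  jaccard_separates wt Q Q' -> jaccard_separates wt Q' Q ->
  (0 < wt a)%N -> (0 < wt b)%N -> Q a b != Q' a b ->
  exists (T : finType) (e : rel T),
    simple_graph e /\ ~ (jpolish theta e =2 e) /\ jpolish theta (jpolish theta e) =2 e.
Proof.
move=> reflQ symQ reflQ' sepQ sepQ' wt_a wt_b QQ'.
have polishQ := jpolish_blowup _ _ _ reflQ sepQ.
exists _, (blowup wt Q); split; first exact: blowup_simple.
split=> [fixed|u v]; last
  by rewrite (jpolish_ext theta polishQ) (jpolish_blowup _ _ _ reflQ' sepQ').
pose u : {k : K & 'I_(wt k)} := existT _ a (Ordinal wt_a).
pose v : {k : K & 'I_(wt k)} := existT _ b (Ordinal wt_b).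
have ab : a != b by apply: contraNneq QQ' => ->; rewrite reflQ reflQ'.
have uv : u != v by apply: contraNneq ab => /(congr1 tag)/= ->.
have := fixed u v; rewrite polishQ /blowup uv /= => Q'E.
by rewrite Q'E eqxx in QQ'.
Qed.

End Polishing.

End Blowup.

Definition all_pairs (n : nat) (f : nat -> nat -> bool) : bool :=
  all (fun a => all (f a) (iota 0 n)) (iota 0 n).

Lemma all_pairsP {n : nat} {f : nat -> nat -> bool} : all_pairs n f -> forall a b : 'I_n, f a b.
Proof.
move=> /allP fn a b; have /allP fa : all (f a) (iota 0 n).
  by apply: fn; rewrite mem_iota ltn_ord.
by apply: fa; rewrite mem_iota ltn_ord.
Qed.

Definition pattern_meet (n : nat) (P : rel nat) (w : nat -> nat) (a b : nat) : nat :=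
  \sum_(0 <= k < n | P a k && P b k) w k.
Definition pattern_join (n : nat) (P : rel nat) (w : nat -> nat) (a b : nat) : nat :=
  \sum_(0 <= k < n | P a k || P b k) w k.

Lemma class_meet_ord n (P : rel nat) (w : nat -> nat) (a b : 'I_n) :
  class_meet (fun k : 'I_n => w k) [rel x y : 'I_n | P x y] a b = pattern_meet n P w a b.
Proof. by rewrite /pattern_meet big_mkord. Qed.

Lemma class_join_ord n (P : rel nat) (w : nat -> nat) (a b : 'I_n) :
  class_join (fun k : 'I_n => w k) [rel x y : 'I_n | P x y] a b = pattern_join n P w a b.
Proof. by rewrite /pattern_join big_mkord. Qed.

(* Sufficient conditions on the coefficients of meet and join for the weights
   w0 + m * w1 to separate at 1/(m+c+1) and 1/(m+c) for every m; on non-edges the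
   meet must not grow with m. *)
Definition affine_separated (c mt0 mt1 jn0 jn1 : nat) (edge : bool) : bool :=
  (0 < jn0) && (if edge then (jn0 <= c * mt0) && (jn1 <= mt0 + c * mt1)
                else [&& mt1 == 0, c.+1 * mt0 <= jn0 & mt0 <= jn1]).

Lemma affine_separatedP c m mt0 mt1 jn0 jn1 edge :
  affine_separated c mt0 mt1 jn0 jn1 edge ->
  ratio_separated (mt0 + m * mt1) (jn0 + m * jn1) edge 1 (m + c).+1 1 (m + c).
Proof.
rewrite /ratio_separated; case: edge => /andP[jn0_gt0].
  by case/andP => jn0_le jn1_le; apply/andP; split; nia.
by case/and3P => /eqP -> jn0_ge jn1_ge; apply/andP; split; nia.
Qed.

Definition apex_arc (h : bool) (a b : nat) : bool :=
  [|| (a == 0) && (b == 1),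
      [&& a == 0, 2 <= b <= 7 & odd b != h],
      (2 <= a <= 6) && (b == a.+1),
      (a == 2) && (b == 7)
    | (2 <= a <= 7) && (b == a + 6)].

Definition apex_hexagon (h : bool) : rel nat :=
  fun a b => [|| a == b, apex_arc h a b | apex_arc h b a].

Definition apex_weights (apex leaf hex k : nat) : nat :=
  if k == 0 then apex else if 2 <= k <= 7 then hex else leaf.

Lemma apex_weights_affine m k :
  apex_weights 1 (3 * m + 7) 4 k = apex_weights 1 7 4 k + m * apex_weights 0 3 0 k.
Proof. by rewrite /apex_weights; case: (k == 0); case: (2 <= k <= 7); lia. Qed.

Lemma apex_hexagon_affine_check h :
  all_pairs 14 (fun a b =>
    affine_separated 4
      (pattern_meet 14 (apex_hexagon h) (apex_weights 1 7 4) a b)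
      (pattern_meet 14 (apex_hexagon h) (apex_weights 0 3 0) a b)
      (pattern_join 14 (apex_hexagon h) (apex_weights 1 7 4) a b)
      (pattern_join 14 (apex_hexagon h) (apex_weights 0 3 0) a b)
      (apex_hexagon (~~ h) a b)).
Proof. by rewrite /pattern_meet /pattern_join unlock; case: h; vm_compute. Qed.

Lemma apex_hexagon_unit_check h :
  all_pairs 14 (fun a b =>
    ratio_separated (pattern_meet 14 (apex_hexagon h) (fun=> 1) a b)
      (pattern_join 14 (apex_hexagon h) (fun=> 1) a b) (apex_hexagon (~~ h) a b) 3 11 2 7).
Proof. by rewrite /pattern_meet /pattern_join unlock; case: h; vm_compute. Qed.

Lemma apex_hexagon_refl h n : reflexive [rel a b : 'I_n | apex_hexagon h a b].
Proof. by move=> a; rewrite /= /apex_hexagon eqxx. Qed.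

Lemma apex_hexagon_sym h n : symmetric [rel a b : 'I_n | apex_hexagon h a b].
Proof.
move=> a b /=; rewrite /apex_hexagon eq_sym.
by case: (b == a); case: (apex_arc h a b); case: (apex_arc h b a).
Qed.

Lemma apex_hexagon_separates_affine h m :
  jaccard_separates 1 (m + 4).+1 1 (m + 4) (fun k : 'I_14 => apex_weights 1 (3 * m + 7) 4 k)
    [rel a b : 'I_14 | apex_hexagon h a b] [rel a b : 'I_14 | apex_hexagon (~~ h) a b].
Proof.
move=> a b; rewrite class_meet_ord class_join_ord /pattern_meet /pattern_join.
under eq_bigr do rewrite apex_weights_affine.
under [X in ratio_separated _ X]eq_bigr do rewrite apex_weights_affine.
rewrite !big_split -!big_distrr /=.
by apply: affine_separatedP; exact: (all_pairsP (apex_hexagon_affine_check h) a b).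
Qed.

Lemma apex_hexagon_separates_unit h :
  jaccard_separates 3 11 2 7 (fun _ : 'I_14 => 1)
    [rel a b : 'I_14 | apex_hexagon h a b] [rel a b : 'I_14 | apex_hexagon (~~ h) a b].
Proof.
move=> a b; rewrite (class_meet_ord _ _ (fun=> 1)) (class_join_ord _ _ (fun=> 1)).
exact: all_pairsP (apex_hexagon_unit_check h) a b.
Qed.

Lemma inv_nat_bracket (theta : R) (c : nat) : (0 < c)%N -> (0 < theta)%R ->
  (theta <= 1 / INR c)%R -> exists m, (1 / INR (m + c).+1 < theta <= 1 / INR (m + c))%R.
Proof.
move=> /ltP/lt_0_INR c_pos theta_pos theta_le.
have r_pos : (0 < / theta)%R by apply: Rinv_0_lt_compat.
have c_le_r : (INR c <= / theta)%R.
  by have := Rinv_le_contravar _ _ theta_pos theta_le; rewrite /Rdiv Rmult_1_l Rinv_inv.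
have [up_gt up_le] := archimed (/ theta).
have up_pos : (0 <= up (/ theta))%Z by apply: le_IZR; lra.
set n := Z.to_nat (up (/ theta)).
have n_E : INR n = IZR (up (/ theta)) by rewrite INR_IZR_INZ Znat.Z2Nat.id.
have c_lt_n : (c < n)%N by apply/ltP/INR_lt; lra.
have c1_le_n : (INR c + 1 <= INR n)%R by rewrite -S_INR; apply/le_INR/leP.
exists (n - c.+1); have n_S : (n - c.+1 + c).+1 = n by lia.
have n_S_INR : INR n = (INR (n - c.+1 + c) + 1)%R by rewrite -S_INR n_S.
rewrite n_S /Rdiv !Rmult_1_l; split.
- by rewrite -[theta]Rinv_inv; apply: Rinv_lt_contravar; [apply: Rmult_lt_0_compat|]; lra.
- by rewrite -[theta]Rinv_inv; apply: Rinv_le_contravar; lra.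
Qed.

Lemma apex_hexagon_jpolish_swap (theta : R) (n1 n2 e1 e2 : nat) (wt : 'I_14 -> nat) :
  (0 < n2)%N -> (0 < e2)%N -> (INR n1 / INR n2 < theta <= INR e1 / INR e2)%R ->
  (forall h, jaccard_separates n1 n2 e1 e2 wt
     [rel a b : 'I_14 | apex_hexagon h a b] [rel a b : 'I_14 | apex_hexagon (~~ h) a b]) ->
  (0 < wt ord0)%N -> (0 < wt (@Ordinal 14 2 isT))%N ->
  exists (T : finType) (e : rel T),
    simple_graph e /\ ~ (jpolish theta e =2 e) /\ jpolish theta (jpolish theta e) =2 e.
Proof.
move=> n2_gt0 e2_gt0 theta_gap sep wt_0 wt_2.
apply: (@blowup_jpolish_swap _ theta n1 n2 e1 e2 n2_gt0 e2_gt0 theta_gap wt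
  _ _ _ _ _ _ _ (sep true) (sep false) wt_0 wt_2) => //.
- exact: apex_hexagon_refl.
- exact: apex_hexagon_sym.
- exact: apex_hexagon_refl.
Qed.

Theorem theorem5 (theta : R) :
  ((0 < theta /\ theta <= 1/4) \/ (3/11 < theta /\ theta <= 2/7))%R ->
  exists (T : finType) (e : rel T),
    simple_graph e /\
    ~ (jpolish theta e =2 e) /\
    jpolish theta (jpolish theta e) =2 e.
Proof.
case=> [[theta_pos theta_le]|theta_gap].
- have [m theta_gap] : exists m, (1 / INR (m + 4).+1 < theta <= 1 / INR (m + 4))%R.
    by apply: inv_nat_bracket => //=; lra.
  apply: (apex_hexagon_jpolish_swap theta 1 (m + 4).+1 1 (m + 4)
           (fun k => apex_weights 1 (3 * m + 7) 4 k)) => //; first by rewrite addn4.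
  by move=> h; apply: apex_hexagon_separates_affine.
- apply: (apex_hexagon_jpolish_swap theta 3 11 2 7 (fun=> 1)) => //.
    by rewrite !INR_IZR_INZ /=; lra.
  exact: apex_hexagon_separates_unit.
Qed.
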